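(* Let $(X,(\cdot,\cdot|\cdot))$ be a 2-inner product space over $\mathbb{K}\in\{\mathbb{R},\mathbb{C}\}$, let $n$ be a positive integer, let $x,y_1,\dots,y_n,z\in X$ and $c_1,\dots,c_n\in\mathbb{K}$. Define the three quantities $A_1=\max_{1\le i\le n}|c_i|^2\sum_{i=1}^n\|y_i|z\|^2$; $A_2(\alpha)=\big(\sum_{i=1}^n|c_i|^{2\alpha}\big)^{1/\alpha}\big(\sum_{i=1}^n\|y_i|z\|^{2\beta}\big)^{1/\beta}$ for $\alpha>1$, $\frac1\alpha+\frac1\beta=1$; $A_3=\sum_{i=1}^n|c_i|^2\max_{1\le i\le n}\|y_i|z\|^2$; and $B_1=\max_{1\le i\ne j\le n}|c_ic_j|\sum_{1\le i\ne j\le n}|(y_i,y_j|z)|$; $B_2(\gamma)=\Big[\big(\sum_{i=1}^n|c_i|^{\gamma}\big)^2-\sum_{i=1}^n|c_i|^{2\gamma}\Big]^{1/\gamma}\big(\sum_{1\le i\ne j\le n}|(y_i,y_j|z)|^{\delta}\big)^{1/\delta}$ for $\gamma>1$, $\frac1\gamma+\frac1\delta=1$; $B_3=\Big[\big(\sum_{i=1}^n|c_i|\big)^2-\sum_{i=1}^n|c_i|^2\Big]\max_{1\le i\ne j\le n}|(y_i,y_j|z)|$. Then for every choice of $A\in\{A_1,A_2(\alpha),A_3\}$ and $B\in\{B_1,B_2(\gamma),B_3\}$ (with any admissible $\alpha,\gamma$), \[ \Big|\sum_{i=1}^n c_i(x,y_i|z)\Big|^2\le \|x|z\|^2\,(A+B).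 \]
   Context: A 2-inner product on a linear space $X$ of dimension greater than $1$ over $\mathbb{K}$ ($\mathbb{K}=\mathbb{R}$ or $\mathbb{C}$) is a function $(\cdot,\cdot|\cdot):X\times X\times X\to\mathbb{K}$ such that for all $x,x',y,z\in X$ and $\alpha\in\mathbb{K}$: (i) $(x,x|z)\ge 0$, and $(x,x|z)=0$ iff $x$ and $z$ are linearly dependent; (ii) $(x,x|z)=(z,z|x)$; (iii) $(y,x|z)=\overline{(x,y|z)}$; (iv) $(\alpha x,y|z)=\alpha(x,y|z)$; (v) $(x+x',y|z)=(x,y|z)+(x',y|z)$. The associated 2-norm is $\|x|z\|=\sqrt{(x,x|z)}$. Sums and maxima indexed by $1\le i\ne j\le n$ run over all ordered pairs $(i,j)$ with $i,j\in\{1,\dots,n\}$, $i\ne j$. *)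

From mathcomp Require Import all_boot all_order all_algebra.
From mathcomp Require Import reals exp.
From mathcomp Require Import complex.
Import Order.TTheory GRing.Theory Num.Theory.

Set Implicit Arguments.
Unset Strict Implicit.
Unset Printing Implicit Defensive.

Local Open Scope ring_scope.

Definition lin_dep2 (K : numDomainType) (X : lmodType K) (x z : X) : Prop :=
  exists a b : K, (a != 0 \/ b != 0) /\ a *: x + b *: z = 0.

(* A 2-inner product on a K-linear space X of dimension greater than 1;
   [conj] is the conjugation of K (identity for K = R, complex conjugation
   for K = C). *)
Record two_inner_product (K : numDomainType) (conj : K -> K)
    (X : lmodType K) (ip : X -> X -> X -> K) : Prop := {
  tip_dim : exists u v : X, ~ lin_dep2 u v;
  tip_nonneg : forall x z : X, 0 <= ip x x z;
  tip_zero : forall x z : X, ip x x z = 0 <-> lin_dep2 x z;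
  tip_sym : forall x z : X, ip x x z = ip z z x;
  tip_conj : forall x y z : X, ip y x z = conj (ip x y z);
  tip_scale : forall (a : K) (x y z : X), ip (a *: x) y z = a * ip x y z;
  tip_add : forall x x' y z : X, ip (x + x') y z = ip x y z + ip x' y z
}.

Section Quantities.
Variables (R : realType) (K : numDomainType) (absK : K -> R).
Variables (X : lmodType K) (ip : X -> X -> X -> K).
Variables (n : nat) (y : 'I_n -> X) (z : X) (c : 'I_n -> K).

Definition nc (i : 'I_n) : R := absK (c i).
(* ||y_i|z||^2 = (y_i,y_i|z)  (a nonnegative real, taken via its modulus) *)
Definition ny2 (i : 'I_n) : R := absK (ip (y i) (y i) z).
Definition gij (i j : 'I_n) : R := absK (ip (y i) (y j) z).

Definition A1 : R :=
  (\big[Num.max/0]_(i < n) (nc i ^+ 2)) * \sum_(i < n) ny2 i.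

Definition A2 (al be : R) : R :=
  (\sum_(i < n) nc i `^ (2 * al)) `^ (1 / al) *
  (\sum_(i < n) ny2 i `^ be) `^ (1 / be).

Definition A3 : R :=
  (\sum_(i < n) nc i ^+ 2) * \big[Num.max/0]_(i < n) ny2 i.

Definition B1 : R :=
  (\big[Num.max/0]_(i < n) \big[Num.max/0]_(j < n | j != i) (nc i * nc j)) *
  \sum_(i < n) \sum_(j < n | j != i) gij i j.

Definition B2 (ga de : R) : R :=
  ((\sum_(i < n) nc i `^ ga) ^+ 2 - \sum_(i < n) nc i `^ (2 * ga)) `^ (1 / ga) *
  (\sum_(i < n) \sum_(j < n | j != i) gij i j `^ de) `^ (1 / de).

Definition B3 : R :=
  ((\sum_(i < n) nc i) ^+ 2 - \sum_(i < n) nc i ^+ 2) *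
  \big[Num.max/0]_(i < n) \big[Num.max/0]_(j < n | j != i) gij i j.

Definition A_choice (A : R) : Prop :=
  A = A1 \/
  (exists al be : R, 1 < al /\ al^-1 + be^-1 = 1 /\ A = A2 al be) \/
  A = A3.

Definition B_choice (B : R) : Prop :=
  B = B1 \/
  (exists ga de : R, 1 < ga /\ ga^-1 + de^-1 = 1 /\ B = B2 ga de) \/
  B = B3.

Definition main_ineq (x : X) : Prop :=
  forall A B : R, A_choice A -> B_choice B ->
    absK (\sum_(i < n) c i * ip x (y i) z) ^+ 2 <= absK (ip x x z) * (A + B).

End Quantities.

From mathcomp Require Import all_boot all_order all_algebra.
From mathcomp Require Import reals exp.
From mathcomp Require Import complex.
From mathcomp Require Import ring lra.
Import Order.TTheory GRing.Theory Num.Theory.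

(* With w = sum_i conj(c_i) y_i the left-hand side is |(x, w | z)|^2. Along
   t = -s (x, w | z), s real, the norm ||x + t w | z||^2 is a nonnegative real
   quadratic in s, which gives the Cauchy-Schwarz inequality
   |(x, w | z)|^2 <= ||x|z||^2 ||w|z||^2. Expanding ||w|z||^2 bounds it by the
   diagonal part sum_i |c_i|^2 ||y_i|z||^2 plus the off-diagonal part
   sum_(i <> j) |c_i| |c_j| |(y_i, y_j | z)|; each admissible A bounds the first and
   each B the second, either by pulling out a maximum or by Hoelder's inequality.
   The real and complex cases are handled together through an abstract conjugation
   of K and an order embedding of R into K. *)

Set Implicit Arguments.
Unset Strict Implicit.
Unset Printing Implicit Defensive.
Local Open Scope ring_scope.

Lemma sum_offdiag_mul (T : comPzRingType) (n : nat) (f : 'I_n -> T) :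
  \sum_(i < n) \sum_(j < n | j != i) f i * f j =
  (\sum_(i < n) f i) ^+ 2 - \sum_(i < n) f i ^+ 2.
Proof.
rewrite expr2 mulr_suml -sumrB; apply: eq_bigr => i _.
by rewrite mulr_sumr [in RHS](bigD1 i) //= expr2 addrC addrK.
Qed.

Section RealSums.
Variable R : realType.

Lemma sum_mul_le_bound (I : finType) (P : pred I) (u v : I -> R) (M : R) :
  (forall i, P i -> u i <= M) -> (forall i, P i -> 0 <= v i) ->
  \sum_(i | P i) u i * v i <= M * \sum_(i | P i) v i.
Proof.
move=> uM v0; rewrite mulr_sumr; apply: ler_sum => i Pi.
by rewrite ler_wpM2r ?uM ?v0.
Qed.

Lemma quadratic_ge0_le (a c w : R) : 0 <= w ->
  (forall s, 0 <= a - 2 * s * c + s ^+ 2 * c * w) -> c <= a * w.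
Proof.
move=> w0 q_ge0; have [w_eq0|w_neq0] := eqVneq w 0.
  rewrite w_eq0 mulr0 leNgt; apply/negP => c_gt0.
  have := q_ge0 ((a + 1) / (2 * c)); rewrite w_eq0 mulr0 addr0.
  have -> : 2 * ((a + 1) / (2 * c)) * c = a + 1 by field; rewrite gt_eqF.
  lra.
have := mulr_ge0 (q_ge0 w^-1) w0.
have -> : (a - 2 * w^-1 * c + w^-1 ^+ 2 * c * w) * w = a * w - c by field.
lra.
Qed.

Lemma conjugate_exponent_gt0 (p q : R) : 1 < p -> p^-1 + q^-1 = 1 -> 0 < p /\ 0 < q.
Proof.
move=> p_gt1 pq; have p_gt0 : 0 < p by apply: lt_trans p_gt1.
split=> //; rewrite -invr_gt0 -(ltrD2l p^-1) pq addr0 invf_lt1 //.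
Qed.

Lemma powR_div (x y p : R) : 0 <= x -> 0 < y -> (x / y) `^ p = x `^ p / y `^ p.
Proof.
move=> x0 y0; rewrite powRM ?invr_ge0 ?(ltW y0) //.
by rewrite -powR_inv1 ?ltW // -powRrM mulN1r powRN.
Qed.

Lemma sum_mul_powR_eq0 (I : finType) (P : pred I) (a b : I -> R) (p : R) :
  (forall i, 0 <= a i) -> \sum_(i | P i) a i `^ p = 0 ->
  \sum_(i | P i) a i * b i = 0.
Proof.
move=> a0 Sa0; apply: big1 => i Pi.
have /powR_eq0_eq0 -> := psumr_eq0P (fun j _ => powR_ge0 (a j) p) Sa0 Pi.
exact: mul0r.
Qed.

Lemma hoelder_sum (I : finType) (P : pred I) (a b : I -> R) (p q : R) :
  (forall i, 0 <= a i) -> (forall i, 0 <= b i) ->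
  0 < p -> 0 < q -> p^-1 + q^-1 = 1 ->
  \sum_(i | P i) a i * b i <=
  (\sum_(i | P i) a i `^ p) `^ p^-1 * (\sum_(i | P i) b i `^ q) `^ q^-1.
Proof.
move=> a0 b0 p0 q0 pq.
set Sa := \sum_(i | P i) a i `^ p; set Sb := \sum_(i | P i) b i `^ q.
have rhs_ge0 : 0 <= Sa `^ p^-1 * Sb `^ q^-1 by rewrite mulr_ge0 ?powR_ge0.
have [Sa0|Sa_neq0] := eqVneq Sa 0; first by rewrite (sum_mul_powR_eq0 _ a0 Sa0).
have [Sb0|Sb_neq0] := eqVneq Sb 0.
  by under eq_bigr do rewrite mulrC; rewrite (sum_mul_powR_eq0 _ b0 Sb0).
have Sa_gt0 : 0 < Sa by rewrite lt_def Sa_neq0 sumr_ge0 // => i _; apply: powR_ge0.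
have Sb_gt0 : 0 < Sb by rewrite lt_def Sb_neq0 sumr_ge0 // => i _; apply: powR_ge0.
set Na := Sa `^ p^-1; set Nb := Sb `^ q^-1.
have Na_gt0 : 0 < Na by apply: powR_gt0.
have Nb_gt0 : 0 < Nb by apply: powR_gt0.
have NaE : Na `^ p = Sa by rewrite -powRrM mulVf ?gt_eqF // powRr1 ?ltW.
have NbE : Nb `^ q = Sb by rewrite -powRrM mulVf ?gt_eqF // powRr1 ?ltW.
have young i : a i / Na * (b i / Nb) <= a i `^ p / Sa / p + b i `^ q / Sb / q.
  rewrite -NaE -NbE -!powR_div //.
  apply: conjugate_powR (divr_ge0 (a0 i) (ltW Na_gt0)) _ p0 q0 pq.
  exact: divr_ge0 (b0 i) (ltW Nb_gt0).
have normalized : \sum_(i | P i) a i / Na * (b i / Nb) <= 1.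
  apply: le_trans (ler_sum _ (fun i _ => young i)) _.
  have sum_div (F : I -> R) (S r : R) :
      \sum_(i | P i) F i / S / r = (\sum_(i | P i) F i) / S / r by rewrite !mulr_suml.
  by rewrite big_split /= !sum_div -/Sa -/Sb !mulfV ?gt_eqF // !mul1r pq.
clearbody Na Nb.
have -> : \sum_(i | P i) a i * b i = Na * Nb * \sum_(i | P i) a i / Na * (b i / Nb).
  rewrite mulr_sumr; apply: eq_bigr => i _.
  by rewrite mulrACA [Na * _]mulrC [Nb * _]mulrC !divfK ?gt_eqF.
by rewrite -[leRHS]mulr1 ler_pM2l ?mulr_gt0.
Qed.

End RealSums.

Section ChoiceBounds.
Variables (R : realType) (K : numDomainType) (absK : K -> R).
Hypothesis absK_ge0 : forall a, 0 <= absK a.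
Variables (X : lmodType K) (ip : X -> X -> X -> K).
Variables (n : nat) (y : 'I_n -> X) (z : X) (c : 'I_n -> K).

Local Notation nc := (nc absK c).
Local Notation ny2 := (ny2 absK ip y z).
Local Notation gij := (gij absK ip y z).

Lemma A_choice_ge (A : R) : A_choice absK ip y z c A ->
  \sum_(i < n) nc i ^+ 2 * ny2 i <= A.
Proof.
rewrite /A_choice => -[->|[[al [be [al_gt1 [albe ->]]]]|->]].
- by apply: sum_mul_le_bound => i _; [apply: le_bigmax | apply: absK_ge0].
- have [al_gt0 be_gt0] := conjugate_exponent_gt0 al_gt1 albe.
  rewrite /A2 !div1r.
  under [X in X `^ _ * _]eq_bigr do rewrite powRrM powR_mulrn ?absK_ge0 //.
  by apply: hoelder_sum => // i; rewrite ?sqr_ge0 ?absK_ge0.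
- rewrite /A3 mulrC; under eq_bigr do rewrite mulrC.
  by apply: sum_mul_le_bound => i _; [apply: le_bigmax | apply: sqr_ge0].
Qed.

Lemma B_choice_ge (B : R) : B_choice absK ip y z c B ->
  \sum_(i < n) \sum_(j < n | j != i) nc i * nc j * gij i j <= B.
Proof.
have bigmax2_ge (f : 'I_n -> 'I_n -> R) i j : j != i ->
    f i j <= \big[Num.max/0]_(i < n) \big[Num.max/0]_(j < n | j != i) f i j.
  by move=> ji; apply: le_trans (le_bigmax _ _ i); apply: le_bigmax_cond.
rewrite /B_choice => -[->|[[ga [de [ga_gt1 [gade ->]]]]|->]].
- rewrite /B1 !pair_big_dep /=.
  by apply: sum_mul_le_bound => -[i j] /= ji; rewrite ?bigmax2_ge ?absK_ge0.
- have [ga_gt0 de_gt0] := conjugate_exponent_gt0 ga_gt1 gade.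
  rewrite /B2 !div1r.
  under [X in _ - X]eq_bigr do rewrite mulrC powRrM powR_mulrn ?powR_ge0 //.
  rewrite -sum_offdiag_mul.
  under [X in X `^ _ * _]eq_bigr => i _ do
    under eq_bigr => j _ do rewrite -powRM ?absK_ge0 //.
  rewrite !pair_big_dep /=.
  by apply: hoelder_sum => // -[i j]; rewrite ?mulr_ge0 ?absK_ge0.
- rewrite /B3 -sum_offdiag_mul mulrC !pair_big_dep /=.
  under eq_bigr do rewrite mulrC.
  by apply: sum_mul_le_bound => -[i j] /= ji; rewrite ?bigmax2_ge ?mulr_ge0 ?absK_ge0.
Qed.

End ChoiceBounds.

Section TwoInnerProduct.
Variables (R : realType) (K : numDomainType).
Variables (conj : {rmorphism K -> K}) (emb : {rmorphism R -> K}) (absK : K -> R).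
Hypotheses (conjK : involutive conj) (mul_conj : forall a, a * conj a = `|a| ^+ 2).
Hypotheses (conj_emb : forall r, conj (emb r) = emb r).
Hypotheses (ler_emb : {mono emb : r s / r <= s}) (emb_absK : forall a, emb (absK a) = `|a|).

Lemma norm_conj a : `|conj a| = `|a|.
Proof.
apply/eqP; rewrite -(eqrXn2 (ltn0Sn 1)) ?normr_ge0 //.
by rewrite -!mul_conj conjK mulrC.
Qed.

Lemma absK_ge0 a : 0 <= absK a.
Proof. by rewrite -ler_emb rmorph0 emb_absK normr_ge0. Qed.

Lemma absKM : {morph absK : a b / a * b}.
Proof. by move=> a b; apply: (fmorph_inj emb); rewrite rmorphM !emb_absK normrM. Qed.

Lemma absKJ a : absK (conj a) = absK a.
Proof. by apply: (fmorph_inj emb); rewrite !emb_absK norm_conj. Qed.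

Lemma ler_absK_sum (I : Type) (r : seq I) (P : pred I) (F : I -> K) :
  absK (\sum_(i <- r | P i) F i) <= \sum_(i <- r | P i) absK (F i).
Proof.
rewrite -ler_emb emb_absK rmorph_sum.
by under [X in _ <= X]eq_bigr do rewrite emb_absK; apply: ler_norm_sum.
Qed.

Variables (X : lmodType K) (ip : X -> X -> X -> K).
Hypothesis tip : two_inner_product conj ip.
Variable z : X.

Lemma ipZr a x y : ip x (a *: y) z = conj a * ip x y z.
Proof. by rewrite (tip_conj tip) (tip_scale tip) rmorphM -(tip_conj tip). Qed.

Lemma ipDr x y y' : ip x (y + y') z = ip x y z + ip x y' z.
Proof. by rewrite (tip_conj tip) (tip_add tip) rmorphD -!(tip_conj tip). Qed.

Lemma ip_suml (I : Type) (r : seq I) (F : I -> X) y :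
  ip (\sum_(i <- r) F i) y z = \sum_(i <- r) ip (F i) y z.
Proof.
have ip0l : ip 0 y z = 0 by rewrite -(scale0r 0) (tip_scale tip) mul0r.
exact: (big_morph _ (fun u v => tip_add tip u v y z) ip0l).
Qed.

Lemma ip_sumr (I : Type) (r : seq I) (F : I -> X) x :
  ip x (\sum_(i <- r) F i) z = \sum_(i <- r) ip x (F i) z.
Proof.
by rewrite (tip_conj tip) ip_suml rmorph_sum; under eq_bigr do rewrite -(tip_conj tip).
Qed.

Lemma tip_cauchy_schwarz x w :
  absK (ip x w z) ^+ 2 <= absK (ip x x z) * absK (ip w w z).
Proof.
set b := ip x w z; apply: quadratic_ge0_le; first exact: absK_ge0.
move=> s; rewrite -ler_emb rmorph0.
pose t := - (emb s * b).
have -> : emb (absK (ip x x z) - 2 * s * absK b ^+ 2 + s ^+ 2 * absK b ^+ 2 * absK (ip w w z))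
    = ip (x + t *: w) (x + t *: w) z.
  rewrite !(tip_add tip, tip_scale tip, ipDr, ipZr) -/b (tip_conj tip x w) -/b /t.
  rewrite !(rmorphD, rmorphB, rmorphN, rmorphM, rmorphXn, rmorph_nat) conj_emb !emb_absK.
  rewrite (ger0_norm (tip_nonneg tip x z)) (ger0_norm (tip_nonneg tip w z)).
  by rewrite -expr2 -mul_conj rmorph1; ring.
exact: (tip_nonneg tip).
Qed.

Lemma tip_sum_le n x (y : 'I_n -> X) (c : 'I_n -> K) :
  absK (\sum_(i < n) c i * ip x (y i) z) ^+ 2 <= absK (ip x x z) *
    (\sum_(i < n) nc absK c i ^+ 2 * ny2 absK ip y z i +
     \sum_(i < n) \sum_(j < n | j != i) nc absK c i * nc absK c j * gij absK ip y z i j).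
Proof.
pose w := \sum_(i < n) conj (c i) *: y i.
have -> : \sum_(i < n) c i * ip x (y i) z = ip x w z.
  by rewrite ip_sumr; apply: eq_bigr => i _; rewrite ipZr conjK.
apply: le_trans (tip_cauchy_schwarz x w) _; rewrite ler_wpM2l ?absK_ge0 //.
rewrite /w ip_suml -big_split /=; apply: le_trans (ler_absK_sum _ _ _) _.
apply: ler_sum => i _; rewrite (tip_scale tip) ip_sumr absKM absKJ.
under [X in _ * absK X]eq_bigr do rewrite ipZr conjK.
apply: le_trans (ler_wpM2l (absK_ge0 _) (ler_absK_sum _ _ _)) _.
rewrite [in leLHS](bigD1 i) //= mulrDr mulr_sumr !absKM expr2 mulrA lerD2l.
by apply: ler_sum => j _; rewrite absKM !mulrA.
Qed.

Lemma tip_main_ineq n x (y : 'I_n -> X) (c : 'I_n -> K) : main_ineq absK ip y z c x.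
Proof.
move=> A B hA hB; apply: le_trans (tip_sum_le x y c) _.
rewrite ler_wpM2l ?absK_ge0 // lerD //.
- exact: (A_choice_ge absK_ge0 hA).
- exact: (B_choice_ge absK_ge0 hB).
Qed.

End TwoInnerProduct.

Theorem theorem3p1 (R : realType) :
  (forall (X : lmodType R) (ip : X -> X -> X -> R),
     two_inner_product (fun a : R => a) ip ->
     forall (n : nat), (0 < n)%N ->
     forall (x : X) (y : 'I_n -> X) (z : X) (c : 'I_n -> R),
       main_ineq (fun a : R => `|a|) ip y z c x) /\
  (forall (X : lmodType R[i]) (ip : X -> X -> X -> R[i]),
     two_inner_product (fun a : R[i] => a^*) ip ->
     forall (n : nat), (0 < n)%N ->
     forall (x : X) (y : 'I_n -> X) (z : X) (c : 'I_n -> R[i]),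
       main_ineq (fun a : R[i] => Normc.normc a) ip y z c x).
Proof.
split=> X ip tip n _ x y z c.
- apply: (tip_main_ineq (conj := idfun) (emb := idfun) _ _ _ _ _ tip) => //.
  by move=> a; rewrite real_normK ?num_real.
- apply: (tip_main_ineq (conj := Num.conj) (emb := real_complex R) _ _ _ _ _ tip) => //.
  + exact: conjCK.
  + by move=> a; rewrite normCK.
  + by move=> r; apply: conj_Creal; rewrite complex_real.
  + exact: lecR.
Qed.
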